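(* For all integers $d\ge2$ and $N\ge1$, the quantity $\|\cdot\|_{\mathcal Q}$ is a norm on $\mathbb R^N$.
   Context: Let $|\Omega\rangle=\sum_{i=1}^d|i\rangle\otimes|i\rangle\in\mathbb C^d\otimes\mathbb C^d$ (unnormalized) and $\omega=|\Omega\rangle\langle\Omega|$. On $(\mathbb C^d)^{\otimes(N+1)}$, with tensor factors labelled $0,1,\dots,N$, $\omega_{(0,i)}\otimes I^{\otimes(N-1)}$ denotes the operator acting as $\omega$ on factors $0$ and $i$ and as the identity on the other factors. For $x\in\mathbb R^N$ let $S_x=\sum_{i=1}^N|x_i|\,\omega_{(0,i)}\otimes I^{\otimes(N-1)}$ and $\|x\|_{\mathcal Q}=\frac{d\,\lambda_{\max}(S_x)-\|x\|_1}{d^2-1}$, where $\lambda_{\max}$ denotes the largest eigenvalue and $\|x\|_1=\sum_i|x_i|$. *)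

From HB Require Import structures.
From mathcomp Require Import all_boot all_order all_algebra.
From mathcomp Require Import classical_sets reals.
Set Implicit Arguments. Unset Strict Implicit. Unset Printing Implicit Defensive.
Import Order.TTheory GRing.Theory Num.Theory.
Local Open Scope ring_scope.
Local Open Scope classical_set_scope.

(* Computational basis of (C^d)^{(N+1)}: tuples a : {0..N} -> {0..d-1},
   factor 0 is ord0, factor i (1 <= i <= N) is lift ord0 (i-1). *)
Definition tidx (d N : nat) := {ffun 'I_N.+1 -> 'I_d}.

(* Matrix entry <a| omega_(0,k) (x) I^{N-1} |b>, with omega = |Omega><Omega|,
   Omega = sum_i |i>|i> :  delta(a_0,a_k) delta(b_0,b_k) prod_{m<>0,k} delta(a_m,b_m). *)
Definition omega_entry (R : realType) (d N : nat) (k : 'I_N.+1)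
  (a b : tidx d N) : R :=
  ((a ord0 == a k) && (b ord0 == b k)
   && [forall m : 'I_N.+1, ((m != ord0) && (m != k)) ==> (a m == b m)])%:R.

Definition omega0k (R : realType) (d N : nat) (k : 'I_N.+1) :
  'M[R]_#|tidx d N| :=
  \matrix_(i, j) omega_entry R k (enum_val i) (enum_val j).

(* S_x = sum_{i=1}^N |x_i| omega_(0,i) (x) I^{N-1};  x_i is x 0 (i-1). *)
Definition Smat (R : realType) (d N : nat) (x : 'rV[R]_N) : 'M[R]_#|tidx d N| :=
  \sum_(k < N) `|x 0 k| *: omega0k R d (lift ord0 k).

Definition lambda_max (R : realType) (n : nat) (A : 'M[R]_n) : R :=
  sup [set a : R | eigenvalue A a].

Definition norm1 (R : realType) (N : nat) (x : 'rV[R]_N) : R :=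
  \sum_(i < N) `|x 0 i|.

Definition Qnorm (R : realType) (d N : nat) (x : 'rV[R]_N) : R :=
  (d%:R * lambda_max (Smat d x) - norm1 x) / (d%:R ^+ 2 - 1).

Definition is_norm (R : realType) (N : nat) (f : 'rV[R]_N -> R) : Prop :=
  [/\ forall x, 0 <= f x,
      forall x, f x = 0 -> x = 0,
      forall (c : R) x, f (c *: x) = `|c| * f x
    & forall x y, f (x + y) <= f x + f y].

From HB Require Import structures.
From mathcomp Require Import all_boot all_order all_algebra.
From mathcomp Require Import reals.
From mathcomp Require Import ring lra.
Set Implicit Arguments. Unset Strict Implicit. Unset Printing Implicit Defensive.
Import Order.TTheory GRing.Theory Num.Theory.
Local Open Scope ring_scope.

(* ||x||_Q is a norm: we compute lambda_max(S_x) through an explicit eigenvector.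
   Write a_k = |x_k| and D = d - 1.  A certificate for a is a nonnegative,
   nonzero c : 'I_N -> R with a_k (sum_j c_j + D c_k) = mu c_k for all k.
   - A certificate always exists: mu is a root, right of all poles, of the
     secular equation sum_j a_j / (mu - D a_j) = 1 (intermediate value theorem).
   - In the computational basis, omega_(0,k) (x) I sums a vector over the d labels
     that are diagonal on the factors {0,k} and agree elsewhere ("fibers").  So
     f_c = sum_j c_j |Omega>_(0,j)|0...0> satisfies S_x f_c = mu f_c, while a
     weighted Cauchy-Schwarz inequality on each fiber gives <f,S_x f> <= mu |f|^2
     for every f.  Hence lambda_max(S_x) = mu.
   - With |f_c|^2 = (sum c)^2 + D sum c^2, the certificate yields the identity
     (d lambda_max(S_x) - |x|_1) |f_c|^2 = sum_k |x_k| defect_k(c) with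
     defect_k(c) >= 2 d D c_k sum c >= 0, and the Rayleigh bound at f_c turns the
     identity into an inequality for any other x. *)

Lemma sum_indicator (R : pzSemiRingType) (I : finType) (P : pred I) (F : I -> R) :
  \sum_i (P i)%:R * F i = \sum_(i | P i) F i.
Proof. by rewrite [RHS]big_mkcond; apply: eq_bigr => i _; case: (P i); rewrite ?mul1r ?mul0r. Qed.

Lemma sum_affine (R : comPzRingType) (I : finType) (a Q : I -> R) (K X : R) :
  K * (\sum_k a k * Q k) - (\sum_k a k) * X = \sum_k a k * (K * Q k - X).
Proof. by rewrite mulr_sumr mulr_suml -sumrB; apply: eq_bigr => k _; ring. Qed.

Lemma sumsq_le_sqsum (R : numDomainType) N (c : 'I_N -> R) :
  (forall k, 0 <= c k) -> \sum_j c j ^+ 2 <= (\sum_j c j) ^+ 2.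
Proof.
move=> hc; rewrite expr2 mulr_suml; apply: ler_sum => i _.
rewrite expr2 (bigD1 i) //= mulrDr lerDl.
by apply: mulr_ge0 => //; apply: sumr_ge0.
Qed.

(* Weighted Cauchy-Schwarz inequality, from sum_(i,j) w_i w_j (u_i - u_j)^2 >= 0. *)
Lemma weighted_cauchy_schwarz (R : realDomainType) (I : finType) (u w : I -> R) :
  (forall i, 0 <= w i) ->
  (\sum_i u i * w i) ^+ 2 <= (\sum_i u i ^+ 2 * w i) * (\sum_i w i).
Proof.
move=> hw.
have -> : (\sum_i u i * w i) ^+ 2 = \sum_i \sum_j u i * w i * (u j * w j).
  by rewrite expr2 mulr_suml; apply: eq_bigr => i _; rewrite mulr_sumr.
have -> : (\sum_i u i ^+ 2 * w i) * (\sum_i w i) = \sum_i \sum_j u i ^+ 2 * w i * w j.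
  by rewrite mulr_suml; apply: eq_bigr => i _; rewrite mulr_sumr.
set A := (X in _ <= X).
have A2 : (1 + 1) * A = \sum_i \sum_j (u i ^+ 2 * w i * w j + u j ^+ 2 * w j * w i).
  under eq_bigr => i _ do rewrite big_split /=.
  by rewrite big_split /= mulrDl mul1r; congr (_ + _); rewrite exchange_big.
rewrite -(ler_pM2l (ltr0Sn R 1)) A2 mulr_sumr; apply: ler_sum => i _.
rewrite mulr_sumr; apply: ler_sum => j _.
have := mulr_ge0 (mulr_ge0 (hw i) (hw j)) (sqr_ge0 (u i - u j)).
move: (w i) (w j) (u i) (u j) => a b x y h.
rewrite -subr_ge0; suff -> : x ^+ 2 * a * b + y ^+ 2 * b * a - (1 + 1) * (x * a * (y * b))
  = a * b * (x - y) ^+ 2 by [].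
by ring.
Qed.

(* It encodes an
   eigenvector of S_x (Lemma lambda_maxE) for a = |x| and D = d - 1. *)
Definition certificate (R : numDomainType) (N : nat) (D : R) (a c : 'I_N -> R) (mu : R) :=
  [/\ forall k, 0 <= c k, 0 < \sum_j c j &
      forall k, a k * (\sum_j c j + D * c k) = mu * c k].

(* The eigenvalue of a certificate with nonnegative weights is nonnegative:
   summing the defining identities gives mu * sum_j c_j >= 0. *)
Lemma certificate_ge0 (R : realFieldType) N (D : R) (a c : 'I_N -> R) mu :
  0 <= D -> (forall k, 0 <= a k) -> certificate D a c mu -> 0 <= mu.
Proof.
move=> hD ha [hc hs he]; rewrite -(pmulr_lge0 _ hs) mulr_sumr.
under eq_bigr => k _ do rewrite -he.
apply: sumr_ge0 => k _; apply: mulr_ge0 => //.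
by apply: addr_ge0; [exact: ltW | exact: mulr_ge0].
Qed.

Lemma certificate_supp (R : realFieldType) N (D : R) (a c : 'I_N -> R) mu k :
  certificate D a c mu -> c k = 0 -> a k = 0.
Proof.
case=> _ hs he ck0; move: (he k); rewrite ck0 !mulr0 addr0 => /eqP.
by rewrite mulf_eq0 (gt_eqF hs) orbF => /eqP.
Qed.

(* Multiplying the identities of a certificate by (sum_j c_j + D c_k) and summing:
   sum_k a_k (sum_j c_j + D c_k)^2 = mu ((sum_j c_j)^2 + D sum_j c_j^2). *)
Lemma certificate_energy (R : numDomainType) N (D : R) (a c : 'I_N -> R) mu :
  certificate D a c mu ->
  \sum_k a k * (\sum_j c j + D * c k) ^+ 2 = mu * ((\sum_j c j) ^+ 2 + D * \sum_j c j ^+ 2).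
Proof.
case=> _ _ he; under eq_bigr => k _ do rewrite expr2 mulrA he -mulrA.
rewrite -mulr_sumr; congr (_ * _).
under eq_bigr => k _ do rewrite mulrDr.
rewrite big_split /= -mulr_suml expr2; congr (_ + _).
by rewrite mulr_sumr; apply: eq_bigr => j _; rewrite mulrCA expr2.
Qed.

Lemma certificate_scale (R : numDomainType) N (D t : R) (a c : 'I_N -> R) mu :
  certificate D a c mu -> certificate D (fun k => t * a k) c (t * mu).
Proof. by case=> hc hs he; split=> // k; rewrite -mulrA he mulrA. Qed.

Section Certificate.
Variables (R : rcfType) (N : nat) (D : R) (a : 'I_N.+1 -> R).
Hypotheses (hD : 0 <= D) (ha : forall k, 0 <= a k).

(* The secular polynomial prod_j (X - D a_j) * (1 - sum_j a_j / (X - D a_j)),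
   written without denominators. *)
Definition secular_poly : {poly R} :=
  \prod_j ('X - (D * a j)%:P) - \sum_j (a j)%:P * \prod_(i | i != j) ('X - (D * a i)%:P).

Lemma secular_horner m : (forall j, 0 < m - D * a j) ->
  secular_poly.[m] = (\prod_j (m - D * a j)) * (1 - \sum_j a j / (m - D * a j)).
Proof.
move=> hm; rewrite hornerD hornerN horner_sum horner_prod.
under eq_bigr => i _ do rewrite hornerXsubC.
under [X in _ - X = _]eq_bigr => j _ do rewrite hornerM hornerC horner_prod.
under [X in _ - X = _]eq_bigr => j _ do under eq_bigr => i _ do rewrite hornerXsubC.
rewrite mulrBr mulr1 mulr_sumr; congr (_ - _); apply: eq_bigr => j _.
rewrite [in RHS](bigD1 j) //=.
have := gt_eqF (hm j); move: (\prod_(i | i != j) _) (m - D * a j) => P b /negbT hb.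
by field.
Qed.

(* When a is not identically zero, the secular equation
   sum_j a_j / (mu - D a_j) = 1 has a root to the right of all its poles:
   the left side is >= 1 at mu = (D+1) max a and <= 1 at mu = D max a + sum a. *)
Lemma secular_root : (exists k, a k != 0) ->
  exists2 mu, (forall j, 0 < mu - D * a j) & \sum_j a j / (mu - D * a j) = 1.
Proof.
case=> k0 ak0; case: (arg_maxP a (P := predT) (i0 := ord0) isT) => j0 _ hmax.
set A := a j0; set M := \sum_j a j.
have Apos : 0 < A by apply: lt_le_trans (hmax k0 isT); rewrite lt_def ak0 ha.
have AM : A <= M by rewrite /M (bigD1 j0) //= lerDl; apply: sumr_ge0.
set lo := (D + 1) * A; set hi := D * A + M.
have gap m j : lo <= m -> A <= m - D * a j.
  move=> hm; rewrite lerBrDr; apply: le_trans hm.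
  by rewrite /lo mulrDl mul1r addrC lerD2r; apply: ler_wpM2l => //; exact: hmax.
have pos m j : lo <= m -> 0 < m - D * a j by move=> hm; exact: lt_le_trans Apos (gap m j hm).
have lohi : lo <= hi by rewrite /lo /hi mulrDl mul1r lerD2l.
have prod_pos m : lo <= m -> 0 < \prod_j (m - D * a j).
  by move=> hm; apply: prodr_gt0 => j _; apply: pos.
have Plo : secular_poly.[lo] <= 0.
  rewrite secular_horner ?pmulr_rle0 ?subr_le0 ?prod_pos // => [|j]; last exact: pos.
  rewrite (bigD1 j0) //=.
  have -> : A / (lo - D * A) = 1.
    by rewrite /lo mulrDl mul1r addrAC subrr add0r divff // gt_eqF.
  rewrite lerDl; apply: sumr_ge0 => j _; apply: divr_ge0 => //; exact: ltW (pos _ _ (lexx _)).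
have Phi : 0 <= secular_poly.[hi].
  rewrite secular_horner ?pmulr_rge0 ?subr_ge0 ?prod_pos // => [|j]; last exact: pos.
  have -> : 1 = \sum_j a j / M by rewrite -mulr_suml divff // gt_eqF // (lt_le_trans Apos AM).
  apply: ler_sum => j _; apply: ler_wpM2l => //.
  rewrite lef_pV2 ?posrE ?pos //; last exact: lt_le_trans Apos AM.
  rewrite /hi addrAC lerDr subr_ge0.
  by apply: ler_wpM2l => //; exact: hmax.
have [mu /andP[lomu _] root_mu] : exists2 mu, lo <= mu <= hi & root secular_poly mu.
  by apply: poly_ivt => //; rewrite Plo Phi.
exists mu => [j|]; first exact: pos.
move: root_mu; rewrite /root secular_horner => [|j]; last exact: pos.
by rewrite mulf_eq0 (gt_eqF (prod_pos _ lomu)) subr_eq0 => /eqP <-.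
Qed.

(* Every nonnegative a has a certificate: the zero weights are certified by the
   constant vector with eigenvalue 0, the others by c_j = a_j / (mu - D a_j). *)
Lemma certificate_exists : exists mu (c : 'I_N.+1 -> R), certificate D a c mu.
Proof.
have [a0|/forallPn[k ak0]] := boolP [forall k, a k == 0].
  exists 0, (fun _ => 1); split => // [|k].
    by rewrite sumr_const card_ord ltr0n.
  by move/forallP: a0 => /(_ k)/eqP ->; rewrite !mul0r.
have [mu hpos hsum] := secular_root (ex_intro _ k ak0).
exists mu, (fun j => a j / (mu - D * a j)); split => [j||j].
- exact: divr_ge0 (ha j) (ltW (hpos j)).
- by rewrite hsum ltr01.
- rewrite hsum; have hb := negbT (gt_eqF (hpos j)).
  have hmu : mu = (mu - D * a j) + D * a j by rewrite subrK.
  rewrite {1}[in RHS]hmu; move: (mu - D * a j) hb => b hb.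
  by field.
Qed.

End Certificate.

Section ProductBasis.
Variables (n N : nat).
Local Notation T := (tidx n.+1 N).

(* [collapse k p] resets the factors 0 and k of the basis label p to 0: two labels
   are coupled by omega_(0,k) exactly when they have the same collapse. *)
Definition collapse (k : 'I_N.+1) (p : T) : T :=
  [ffun m => if (m == ord0) || (m == k) then ord0 else p m].

Definition place (k : 'I_N.+1) (r : T) (i : 'I_n.+1) : T :=
  [ffun m => if (m == ord0) || (m == k) then i else r m].

Definition zero_label : T := [ffun _ => ord0].

Lemma collapse_idem k p : collapse k (collapse k p) = collapse k p.
Proof. by apply/ffunP=> m; rewrite !ffunE; case: ((m == ord0) || (m == k)). Qed.

Lemma collapse_zero k : collapse k zero_label = zero_label.
Proof. by apply/ffunP=> m; rewrite /zero_label !ffunE; case: ((m == ord0) || (m == k)). Qed.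

Lemma place0 k r i : place k r i ord0 = i.
Proof. by rewrite ffunE eqxx. Qed.

Lemma placek k r i : place k r i k = i.
Proof. by rewrite ffunE eqxx orbT. Qed.

Lemma place_other k r i m : m != ord0 -> m != k -> place k r i m = r m.
Proof. by move=> /negbTE m0 /negbTE mk; rewrite ffunE m0 mk. Qed.

Lemma collapse_place k r i : collapse k (place k r i) = collapse k r.
Proof. by apply/ffunP=> m; rewrite !ffunE; case: ((m == ord0) || (m == k)). Qed.

Lemma collapsed_at k r m :
  collapse k r = r -> (m == ord0) || (m == k) -> r m = ord0.
Proof. by move=> hr hm; rewrite -hr ffunE hm. Qed.

Lemma place_eqE k r i q : collapse k r = r ->
  (q == place k r i) = [&& q ord0 == q k, collapse k q == r & i == q ord0].
Proof.
move=> hr; apply/eqP/and3P => [->|[/eqP qk /eqP <- /eqP ->]].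
  by rewrite place0 placek collapse_place hr eqxx.
apply/ffunP=> m; rewrite !ffunE.
by case: ifP => [/orP[]/eqP->|->].
Qed.

Lemma sum_fiber (V : nmodType) k r (F : T -> V) : collapse k r = r ->
  \sum_(q : T | (q ord0 == q k) && (collapse k q == r)) F q
  = \sum_(i : 'I_n.+1) F (place k r i).
Proof.
move=> hr; transitivity
  (\sum_(i : 'I_n.+1) \sum_(q : T) (if q == place k r i then F q else 0)); last first.
  by apply: eq_bigr => i _; rewrite -big_mkcond big_pred1_eq.
rewrite exchange_big big_mkcond; apply: eq_bigr => q _ /=.
rewrite -big_mkcond; case: ifP => [/andP[qk qr]|hq].
  by rewrite (big_pred1 (q ord0)) // => i; rewrite place_eqE // qk qr.
rewrite big_pred0 // => i; rewrite place_eqE //.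
by apply/negbTE/negP => /and3P[qk qr _]; rewrite qk qr in hq.
Qed.

Lemma sum_diag (V : nmodType) k (F : T -> V) :
  \sum_(p : T | p ord0 == p k) F p
  = \sum_(r : T | collapse k r == r) \sum_(i : 'I_n.+1) F (place k r i).
Proof.
rewrite (partition_big (collapse k) (fun r => collapse k r == r)) /=; last first.
  by move=> p _; rewrite collapse_idem.
by apply: eq_bigr => r /eqP hr; rewrite -sum_fiber.
Qed.

End ProductBasis.

Definition site (N : nat) (j : 'I_N) : 'I_N.+1 := lift ord0 j.

Lemma site_neq0 N (j : 'I_N) : (site j == ord0) = false.
Proof. by apply/negbTE; rewrite eq_sym neq_lift. Qed.

Lemma site_eq N (j k : 'I_N) : (site j == site k) = (j == k).
Proof. by rewrite inj_eq //; apply: lift_inj. Qed.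

Section OmegaAction.
Variables (R : realType) (n N : nat).
Local Notation T := (tidx n.+1 N).
Local Notation omega := (@omega_entry R n.+1 N).

Lemma omega_entryE k (p q : T) :
  omega k p q =
  ((p ord0 == p k) && (q ord0 == q k) && (collapse k p == collapse k q))%:R.
Proof.
rewrite /omega_entry; congr (_%:R); congr (_ && _).
apply/forallP/eqP => [h|h m].
  apply/ffunP=> m; rewrite !ffunE; case: ifP => // /negbT.
  by rewrite negb_or => hm; move/implyP: (h m) => /(_ hm)/eqP.
apply/implyP; rewrite -negb_or => /negbTE hm.
by move/ffunP: h => /(_ m); rewrite !ffunE hm => ->.
Qed.

Lemma omega_entry_sym k (p q : T) : omega k p q = omega k q p.
Proof.
by rewrite !omega_entryE [collapse k q == _]eq_sym [(q ord0 == _) && _]andbC.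
Qed.

Lemma omega_apply k (p : T) (F : T -> R) :
  \sum_q omega k p q * F q =
  (p ord0 == p k)%:R * \sum_(i : 'I_n.+1) F (place k (collapse k p) i).
Proof.
rewrite -sum_fiber ?collapse_idem // [in RHS]big_mkcond /= mulr_sumr.
apply: eq_bigr => q _; rewrite omega_entryE [collapse k p == _]eq_sym.
case: (p ord0 == p k); case: (q ord0 == q k); case: (collapse k q == _).
all: by rewrite /= ?mul1r ?mul0r.
Qed.

(* |Omega>_(0,j) (x) |0...0>: the indicator of the labels that are diagonal on the
   factors {0, 1+j} and 0 on all other factors. *)
Definition omega_vec (j : 'I_N) (p : T) : R :=
  ((p ord0 == p (site j)) && (collapse (site j) p == zero_label n N))%:R.

Lemma omega_vecE j (p : T) :
  omega_vec j p = (p ord0 == p (site j))%:R * (collapse (site j) p == zero_label n N)%:R.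
Proof. by rewrite /omega_vec; case: (_ == _); rewrite ?mul1r ?mul0r. Qed.

Lemma omega_vec_zero j : omega_vec j (zero_label n N) = 1.
Proof. by rewrite /omega_vec collapse_zero !ffunE !eqxx. Qed.

Lemma omega_vec_place j k (r : T) i : collapse (site k) r = r ->
  omega_vec j (place (site k) r i) = ((r == zero_label n N) && ((j == k) || (i == ord0)))%:R.
Proof.
move=> hr; rewrite /omega_vec; congr (_%:R); congr (nat_of_bool _).
have [->|njk] := eqVneq j k; first by rewrite place0 placek eqxx collapse_place hr andbT.
have hj : place (site k) r i (site j) = r (site j).
  by rewrite place_other ?site_neq0 ?site_eq.
rewrite orFb place0 hj; apply/andP/andP => [[/eqP ri /eqP hz]|[/eqP -> /eqP ->]].
  have i0 : i = ord0.
    move/ffunP: hz => /(_ (site k)).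
    by rewrite !ffunE site_neq0 site_eq eq_sym (negbTE njk) eqxx orbT.
  split; last by rewrite i0.
  apply/eqP/ffunP=> m; rewrite [RHS]ffunE.
  have [hm|hm] := boolP ((m == ord0) || (m == site k)); first exact: collapsed_at hm.
  have [/eqP->|hmj] := boolP (m == site j); first by rewrite -ri.
  move/ffunP: hz => /(_ m); rewrite !ffunE (negbTE hmj).
  by move: hm; rewrite negb_or => /andP[/negbTE -> /negbTE ->].
split; first by rewrite /zero_label ffunE.
by apply/eqP/ffunP=> m; rewrite /zero_label !ffunE; case: ifP => //; case: ifP.
Qed.

Lemma sum_omega_vec_place j k (r : T) : collapse (site k) r = r ->
  \sum_(i : 'I_n.+1) omega_vec j (place (site k) r i) =
  (r == zero_label n N)%:R * (if j == k then n.+1%:R else 1).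
Proof.
move=> hr; under eq_bigr => i _ do rewrite omega_vec_place //.
have [_|_] := eqVneq j k.
  by under eq_bigr => i _ do rewrite orTb andbT; rewrite sumr_const card_ord mulr_natr.
rewrite mulr1; case: (r == zero_label n N) => /=; last by rewrite big1.
by rewrite (bigD1 ord0) //= big1 ?addr0 // => i /negbTE ->.
Qed.

Lemma omega_apply_vec j k (p : T) :
  \sum_q omega (site k) p q * omega_vec j q =
  omega_vec k p * (if j == k then n.+1%:R else 1).
Proof. by rewrite omega_apply sum_omega_vec_place ?collapse_idem // mulrA -omega_vecE. Qed.

(* The candidate eigenvector f_c = sum_j c_j omega_vec j. *)
Definition combo (c : 'I_N -> R) (p : T) : R := \sum_j c j * omega_vec j p.

Lemma sum_kron (c : 'I_N -> R) k :
  \sum_j c j * (if j == k then n.+1%:R else 1) = \sum_j c j + n%:R * c k.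
Proof.
rewrite (bigD1 k) //= eqxx [in RHS](bigD1 k) //=.
under eq_bigr => j /negbTE -> do rewrite mulr1.
by rewrite -natr1; ring.
Qed.

Lemma omega_apply_combo (c : 'I_N -> R) k (p : T) :
  \sum_q omega (site k) p q * combo c q = omega_vec k p * (\sum_j c j + n%:R * c k).
Proof.
rewrite -sum_kron !mulr_sumr; under eq_bigr => q _ do rewrite /combo mulr_sumr.
rewrite exchange_big /=; apply: eq_bigr => j _.
by under eq_bigr => q _ do rewrite mulrCA; rewrite -mulr_sumr omega_apply_vec mulrCA.
Qed.

Lemma sum_omega_vec_mul k (G : T -> R) :
  \sum_(p : T) omega_vec k p * G p = \sum_(i : 'I_n.+1) G (place (site k) (zero_label n N) i).
Proof. by rewrite sum_indicator sum_fiber ?collapse_zero. Qed.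

Lemma dot_omega_vec j k :
  \sum_(p : T) omega_vec k p * omega_vec j p = if j == k then n.+1%:R else 1.
Proof. by rewrite sum_omega_vec_mul sum_omega_vec_place ?collapse_zero // eqxx mul1r. Qed.

Lemma dot_omega_vec_combo (c : 'I_N -> R) k :
  \sum_(p : T) omega_vec k p * combo c p = \sum_j c j + n%:R * c k.
Proof.
rewrite -sum_kron; under eq_bigr => p _ do rewrite /combo mulr_sumr.
rewrite exchange_big /=; apply: eq_bigr => j _.
by under eq_bigr => p _ do rewrite mulrCA; rewrite -mulr_sumr dot_omega_vec.
Qed.

Lemma norm_combo (c : 'I_N -> R) :
  \sum_(p : T) combo c p ^+ 2 = (\sum_j c j) ^+ 2 + n%:R * \sum_j c j ^+ 2.
Proof.
transitivity (\sum_j c j * \sum_(p : T) omega_vec j p * combo c p).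
  under [RHS]eq_bigr => j _ do rewrite mulr_sumr.
  rewrite [RHS]exchange_big /=; apply: eq_bigr => p _.
  by rewrite expr2 {1}/combo mulr_suml; apply: eq_bigr => j _; rewrite mulrA.
under eq_bigr => j _ do rewrite dot_omega_vec_combo mulrDr.
rewrite big_split /= -mulr_suml expr2; congr (_ + _).
by rewrite mulr_sumr; apply: eq_bigr => j _; rewrite mulrCA expr2.
Qed.

End OmegaAction.

Section RayleighBound.
Variables (R : realType) (n N : nat).
Local Notation T := (tidx n.+1 N).
Local Notation omega := (@omega_entry R n.+1 N).

Definition qform (k : 'I_N) (f : T -> R) : R :=
  \sum_(p : T) f p * \sum_(q : T) omega (site k) p q * f q.

Lemma qformE k f : qform k f =
  \sum_(r : T | collapse (site k) r == r) (\sum_(i : 'I_n.+1) f (place (site k) r i)) ^+ 2.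
Proof.
rewrite /qform; under eq_bigr => p _ do rewrite omega_apply mulrCA.
rewrite sum_indicator sum_diag; apply: eq_bigr => r /eqP hr.
under eq_bigr => i _ do rewrite collapse_place hr.
by rewrite -mulr_suml expr2.
Qed.

Lemma qform_combo (c : 'I_N -> R) k : qform k (combo c) = (\sum_j c j + n%:R * c k) ^+ 2.
Proof.
rewrite /qform; under eq_bigr => p _ do rewrite omega_apply_combo mulrA [combo c p * _]mulrC.
by rewrite -mulr_suml dot_omega_vec_combo expr2.
Qed.

(* The weight of a label: the total of c over the sites on which the label is
   diagonal with factor 0.  Its fiber sums are those of the eigenvector. *)
Definition weight (c : 'I_N -> R) (p : T) : R := \sum_m c m * (p ord0 == p (site m))%:R.

Lemma weight_fiber (c : 'I_N -> R) k (r : T) : collapse (site k) r = r ->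
  \sum_(i : 'I_n.+1) weight c (place (site k) r i) = \sum_j c j + n%:R * c k.
Proof.
move=> hr; rewrite -sum_kron /weight exchange_big /=; apply: eq_bigr => m _.
rewrite -mulr_sumr; congr (_ * _); have [->|nmk] := eqVneq m k.
  by under eq_bigr => i _ do rewrite place0 placek eqxx; rewrite sumr_const card_ord.
under eq_bigr => i _ do rewrite place0 place_other ?site_neq0 ?site_eq //.
by rewrite (bigD1 (r (site m))) //= eqxx big1 ?addr0 // => i /negbTE ->.
Qed.

Lemma weight_ge (c : 'I_N -> R) k (p : T) :
  (forall j, 0 <= c j) -> p ord0 = p (site k) -> c k <= weight c p.
Proof.
move=> hc hp; rewrite /weight (bigD1 k) //= hp eqxx mulr1 lerDl.
by apply: sumr_ge0 => j _; apply: mulr_ge0.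
Qed.

(* Cauchy-Schwarz on every fiber, weighted by [weight c]. *)
Lemma qform_le (c : 'I_N -> R) k f : (forall j, 0 <= c j) -> 0 < c k ->
  qform k f <= (\sum_j c j + n%:R * c k) *
               \sum_(p : T | p ord0 == p (site k)) f p ^+ 2 / weight c p.
Proof.
move=> hc ck; rewrite qformE sum_diag mulr_sumr; apply: ler_sum => r /eqP hr.
set w := fun i => weight c (place (site k) r i).
have wpos i : 0 < w i.
  by apply: lt_le_trans ck _; apply: weight_ge => //; rewrite place0 placek.
have := weighted_cauchy_schwarz (fun i => f (place (site k) r i) / w i) (fun i => ltW (wpos i)).
rewrite weight_fiber // mulrC.
under eq_bigr => i _ do rewrite divfK ?gt_eqF //.
congr (_ <= _ * _); apply: eq_bigr => i _.
rewrite expr_div_n -mulrA; congr (_ * _).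
by rewrite expr2 invfM -mulrA mulVf ?mulr1 ?gt_eqF.
Qed.

Lemma rayleigh_bound (a c : 'I_N -> R) mu f :
  (forall k, 0 <= a k) -> certificate n%:R a c mu ->
  \sum_k a k * qform k f <= mu * \sum_(p : T) f p ^+ 2.
Proof.
move=> ha cert; have mu0 := certificate_ge0 (ler0n _ n) ha cert.
case: cert => hc hs he.
set g := fun p : T => f p ^+ 2 / weight c p.
have fiber k : a k * qform k f <= mu * (c k * \sum_(p : T | p ord0 == p (site k)) g p).
  have [ck0|ckn0] := eqVneq (c k) 0.
    by rewrite (certificate_supp (And3 hc hs he) ck0) ck0 !mul0r mulr0.
  rewrite mulrA -he -mulrA ler_wpM2l //.
  by apply: qform_le => //; rewrite lt_def ckn0 hc.
apply: le_trans (ler_sum _ (fun k _ => fiber k)) _.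
rewrite -mulr_sumr ler_wpM2l //.
under eq_bigr => k _ do rewrite -sum_indicator mulr_sumr.
rewrite exchange_big /=; apply: ler_sum => p _.
have -> : \sum_k c k * ((p ord0 == p (site k))%:R * g p) = g p * weight c p.
  by rewrite /weight mulr_sumr; apply: eq_bigr => k _; rewrite mulrA mulrC.
have [w0|wn0] := eqVneq (weight c p) 0; first by rewrite w0 mulr0 sqr_ge0.
by rewrite divfK.
Qed.

End RayleighBound.

Lemma sum_enum_rank (V : nmodType) (T : finType) (G : 'I_#|T| -> V) :
  \sum_(i < #|T|) G i = \sum_(p : T) G (enum_rank p).
Proof. by rewrite (reindex enum_rank) //; apply: onW_bij; exact: enum_rank_bij. Qed.

Lemma sumsq_gt0 (R : realDomainType) m (v : 'rV[R]_m) : v != 0 -> 0 < \sum_j v 0 j ^+ 2.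
Proof.
move=> hv; have [j hj] : exists j, v 0 j != 0.
  apply/existsP; apply: contraR hv => /existsPn h; apply/eqP/rowP => j.
  by rewrite mxE; move: (h j); rewrite negbK => /eqP.
rewrite (bigD1 j) //=; apply: ltr_wpDr; first by apply: sumr_ge0 => i _; apply: sqr_ge0.
by rewrite lt_def sqrf_eq0 hj sqr_ge0.
Qed.

Section LargestEigenvalue.
Variables (R : realType) (n N : nat).
Local Notation T := (tidx n.+1 N).
Local Notation omega := (@omega_entry R n.+1 N).
Implicit Types (x : 'rV[R]_N) (c : 'I_N -> R).

Lemma Smat_mul x (v : 'rV[R]_#|T|) j : (v *m Smat n.+1 x) 0 j =
  \sum_k `|x 0 k| * \sum_(p : T) omega (site k) (enum_val j) p * v 0 (enum_rank p).
Proof.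
rewrite mxE sum_enum_rank.
under eq_bigr => p _ do rewrite /Smat summxE mulr_sumr.
rewrite exchange_big /=; apply: eq_bigr => k _; rewrite mulr_sumr.
apply: eq_bigr => p _; rewrite !mxE enum_rankK omega_entry_sym mulrCA.
by rewrite [v 0 _ * _]mulrC.
Qed.

Lemma Smat_qform x (v : 'rV[R]_#|T|) :
  \sum_j (v *m Smat n.+1 x) 0 j * v 0 j =
  \sum_k `|x 0 k| * qform k (fun p => v 0 (enum_rank p)).
Proof.
rewrite sum_enum_rank.
under eq_bigr => q _ do rewrite Smat_mul enum_rankK mulr_suml.
rewrite exchange_big /=; apply: eq_bigr => k _.
rewrite /qform mulr_sumr; apply: eq_bigr => q _.
by rewrite -mulrA [_ * v 0 _]mulrC.
Qed.

Lemma certificate_eigenvalue x c mu :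
  certificate n%:R (fun k => `|x 0 k|) c mu -> eigenvalue (Smat n.+1 x) mu.
Proof.
case=> hc hs he; apply/eigenvalueP; exists (\row_i combo c (enum_val i)).
  apply/rowP => j; rewrite Smat_mul !mxE.
  under eq_bigr => k _ do under eq_bigr => p _ do rewrite mxE enum_rankK.
  under eq_bigr => k _ do rewrite omega_apply_combo mulrCA he mulrCA.
  by rewrite /combo mulr_sumr; apply: eq_bigr => k _; rewrite [omega_vec _ _ _ * _]mulrC.
apply/eqP => /rowP /(_ (enum_rank (zero_label n N))); rewrite !mxE enum_rankK /combo.
under eq_bigr => j _ do rewrite omega_vec_zero mulr1.
by move=> h; rewrite h ltxx in hs.
Qed.

Lemma eigenvalue_le x c mu e :
  certificate n%:R (fun k => `|x 0 k|) c mu -> eigenvalue (Smat n.+1 x) e -> e <= mu.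
Proof.
move=> cert /eigenvalueP [v hv vn0].
have hp := sumsq_gt0 vn0; rewrite -(ler_pM2r hp).
have -> : e * \sum_j v 0 j ^+ 2 = \sum_j (v *m Smat n.+1 x) 0 j * v 0 j.
  by rewrite hv mulr_sumr; apply: eq_bigr => j _; rewrite mxE -mulrA -expr2.
rewrite Smat_qform sum_enum_rank.
exact: rayleigh_bound (fun k => normr_ge0 (x 0 k)) cert.
Qed.

Lemma lambda_maxE x c mu :
  certificate n%:R (fun k => `|x 0 k|) c mu -> lambda_max (Smat n.+1 x) = mu.
Proof.
move=> cert; have hmu := certificate_eigenvalue cert.
have ub e : eigenvalue (Smat n.+1 x) e -> e <= mu by exact: eigenvalue_le cert.
apply/le_anti/andP; split; first by apply: ge_sup; [exists mu | exact: ub].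
by apply: ub_le_sup; [exists mu | ].
Qed.

End LargestEigenvalue.

Section QNorm.
Variables (R : realType) (n N : nat).
Implicit Types (x y : 'rV[R]_N.+1) (c : 'I_N.+1 -> R).

Definition qnum x : R := n.+1%:R * lambda_max (Smat n.+1 x) - norm1 x.

(* The squared norm of the eigenvector f_c, and how much the k-th weight
   contributes to qnum in the key identity below. *)
Definition cnorm2 c : R := (\sum_j c j) ^+ 2 + n%:R * \sum_j c j ^+ 2.
Definition defect c k : R := n.+1%:R * (\sum_j c j + n%:R * c k) ^+ 2 - cnorm2 c.

Lemma cnorm2_gt0 c : (forall k, 0 <= c k) -> 0 < \sum_j c j -> 0 < cnorm2 c.
Proof.
move=> hc hs; apply: lt_le_trans (exprn_gt0 2 hs) _; rewrite lerDl.
by apply: mulr_ge0 => //; apply: sumr_ge0 => j _; apply: sqr_ge0.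
Qed.

(* Each defect is at least 2 (n+1) n c_k sum_j c_j, by expanding the square
   and using sum_j c_j^2 <= (sum_j c_j)^2. *)
Lemma defect_ge c k : (forall j, 0 <= c j) ->
  2 * n.+1%:R * n%:R * (\sum_j c j) * c k <= defect c k.
Proof.
move=> hc; rewrite /defect /cnorm2 -[n.+1%:R]natr1.
have hs : 0 <= \sum_j c j by apply: sumr_ge0.
move: (ler0n R n) (hc k) hs (sumsq_le_sqsum hc).
move: (n%:R : R) (c k) (\sum_j c j) (\sum_j c j ^+ 2) => D ck s q hD hck hs hq.
have h1 : 0 <= (D + 1) * (D * ck) ^+ 2 by apply: mulr_ge0; [lra | apply: sqr_ge0].
have h2 : D * q <= D * s ^+ 2 by apply: ler_wpM2l.
have -> : (D + 1) * (s + D * ck) ^+ 2 - (s ^+ 2 + D * q) =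
  2 * (D + 1) * D * s * ck + (D * s ^+ 2 - D * q) + (D + 1) * (D * ck) ^+ 2 by ring.
lra.
Qed.

Lemma defect_ge0 c k : (forall j, 0 <= c j) -> 0 <= defect c k.
Proof.
move=> hc; apply: le_trans (defect_ge k hc); apply: mulr_ge0 (hc k).
by rewrite !mulr_ge0 ?ler0n //; apply: sumr_ge0.
Qed.

Lemma certified x : exists mu c, certificate n%:R (fun k => `|x 0 k|) c mu.
Proof. exact: certificate_exists (ler0n _ n) (fun k => normr_ge0 (x 0 k)). Qed.

Lemma qnum_certificate x c mu : certificate n%:R (fun k => `|x 0 k|) c mu ->
  qnum x * cnorm2 c = \sum_k `|x 0 k| * defect c k.
Proof.
move=> cert; rewrite /qnum (lambda_maxE cert) /defect /cnorm2 /norm1.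
by rewrite mulrBl -mulrA -(certificate_energy cert) sum_affine.
Qed.

(* For any nonnegative c the same sum is a lower bound: this is the Rayleigh
   bound for S_x evaluated at the test vector f_c. *)
Lemma qnum_lower x c : (forall k, 0 <= c k) ->
  \sum_k `|x 0 k| * defect c k <= qnum x * cnorm2 c.
Proof.
move=> hc; have [mu [c' cert]] := certified x.
have := rayleigh_bound (combo c) (fun k => normr_ge0 (x 0 k)) cert.
under eq_bigr => k _ do rewrite qform_combo.
rewrite norm_combo -(lambda_maxE cert) -/(cnorm2 c) => hR.
rewrite /defect -sum_affine /qnum /norm1 mulrBl -mulrA lerD2r.
by apply: ler_wpM2l.
Qed.

Lemma qnum_ge0 x : 0 <= qnum x.
Proof.
have [mu [c cert]] := certified x; have [hc hs _] := cert.
rewrite -(pmulr_lge0 _ (cnorm2_gt0 hc hs)) (qnum_certificate cert).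
by apply: sumr_ge0 => k _; apply: mulr_ge0 => //; apply: defect_ge0.
Qed.

(* Definiteness: for d >= 2 every defect with c_k > 0 is positive, and c_k > 0
   wherever x_k <> 0. *)
Lemma qnum_eq0 x : (0 < n)%N -> qnum x = 0 -> x = 0.
Proof.
move=> n0 q0; have [mu [c cert]] := certified x; have [hc hs _] := cert.
have := qnum_certificate cert; rewrite q0 mul0r => /esym/eqP.
rewrite psumr_eq0 => [/allP vanish|k _]; last first.
  by apply: mulr_ge0 => //; apply: defect_ge0.
apply/rowP => k; rewrite mxE; apply/eqP/negPn/negP => xk.
have ck : 0 < c k.
  rewrite lt_def hc andbT; apply: contra xk => /eqP ck0.
  by rewrite -normr_eq0 (certificate_supp cert ck0).
have : 0 < `|x 0 k| * defect c k.
  rewrite mulr_gt0 ?normr_gt0 //; apply: lt_le_trans (defect_ge k hc).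
  by rewrite !mulr_gt0 ?ltr0n.
by rewrite (eqP (vanish k (mem_index_enum k))) ltxx.
Qed.

(* Homogeneity: a certificate of x, rescaled, certifies t x. *)
Lemma qnumZ t x : qnum (t *: x) = `|t| * qnum x.
Proof.
have [mu [c cert]] := certified x.
have certZ : certificate n%:R (fun k => `|(t *: x) 0 k|) c (`|t| * mu).
  case: (certificate_scale `|t| cert) => hc hs he.
  by split=> // k; rewrite mxE normrM; exact: he.
rewrite /qnum (lambda_maxE certZ) (lambda_maxE cert) /norm1 mulrBr mulr_sumr mulrCA.
by congr (_ - _); apply: eq_bigr => k _; rewrite mxE normrM.
Qed.

(* Triangle inequality: the key identity for x + y, with the lower bound for x
   and for y at the same vector c. *)
Lemma qnum_triangle x y : qnum (x + y) <= qnum x + qnum y.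
Proof.
have [mu [c cert]] := certified (x + y); have [hc hs _] := cert.
rewrite -(ler_pM2r (cnorm2_gt0 hc hs)) (qnum_certificate cert) mulrDl.
apply: le_trans (lerD (qnum_lower x hc) (qnum_lower y hc)).
rewrite -big_split /=; apply: ler_sum => k _; rewrite -mulrDl.
by apply: ler_wpM2r; [exact: defect_ge0 | rewrite mxE ler_normD].
Qed.

End QNorm.

Theorem mainTheorem2 (R : realType) (d N : nat) :
  (2 <= d)%N -> (1 <= N)%N -> is_norm (@Qnorm R d N).
Proof.
case: d => [|n] // hn; case: N => [|N] // _.
have den : 0 < n.+1%:R ^+ 2 - 1 :> R.
  rewrite subr_gt0 -natrX ltr1n; apply: leq_trans hn _.
  by rewrite expnS expn1 leq_pmulr.
have QE (x : 'rV[R]_N.+1) : Qnorm n.+1 x = qnum n x / (n.+1%:R ^+ 2 - 1) by [].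
split => [x | x | t x | x y]; rewrite ?QE.
- by rewrite divr_ge0 ?qnum_ge0 ?ltW.
- move/eqP; rewrite mulf_eq0 invr_eq0 (gt_eqF den) orbF => /eqP; exact: qnum_eq0.
- by rewrite qnumZ mulrA.
- by rewrite -mulrDl ler_pM2r ?invr_gt0 ?qnum_triangle.
Qed.
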